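(* Fix $\alpha\in(0,1)$ and consider the Monte Carlo permutation test described in the context, and suppose $\mathbb{P}(q(\mathcal{X})<1)>0$. Then: (i) If $B\ge 2$ satisfies $k_B-k_{B-1}=1$ and $k_{B+1}-k_B=0$, then $\mathrm{Pow}(B-1)<\mathrm{Pow}(B)$ and $\mathrm{Pow}(B+1)<\mathrm{Pow}(B)$, i.e. $\mathrm{Pow}(B)$ is a strict local maximum of $B\mapsto\mathrm{Pow}(B)$. (ii) There exist infinitely many integers $B\ge 2$ with $k_{B-1}<k_B=k_{B+1}$; consequently the function $B\mapsto \mathrm{Pow}(B)$ has infinitely many strict local maxima.
   Context: Let $\mathcal{X}$ be a random observed dataset taking values in a space on which a finite group $\mathcal{G}$ acts (write $\mathcal{X}^\pi$ for the action of $\pi\in\mathcal{G}$; the identity of $\mathcal{G}$ fixes every dataset), and let $T$ be a real-valued test statistic. Fix $\alpha\in(0,1)$. For an integer $B\ge1$, let $\pi_1,\dots,\pi_B$ be i.i.d. uniform on $\mathcal{G}$, independent of $\mathcal{X}$. The Monte Carlo permutation $p$-value is $p_B(\mathcal{X})=\bigl(1+\sum_{i=1}^B \mathbf{1}\{T(\mathcal{X}^{\pi_i})\ge T(\mathcal{X})\}\bigr)/(B+1)$, and the test rejects iff $p_B(\mathcal{X})\le\alpha$. Define $q(\mathcal{X})=\mathbb{P}(T(\mathcal{X}^\pi)\ge T(\mathcal{X})\mid \mathcal{X})$ for $\pi$ uniform on $\mathcal{G}$ independent of $\mathcal{X}$ (so $q(\mathcal{X})\in[1/|\mathcal{G}|,1]$),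 $R_B=\sum_{i=1}^B \mathbf{1}\{T(\mathcal{X}^{\pi_i})\ge T(\mathcal{X})\}$ (so $R_B\mid\mathcal{X}\sim\mathrm{Binomial}(B,q(\mathcal{X}))$), and the critical count $k_B=\lfloor (B+1)\alpha\rfloor-1$ for integers $B\ge 0$. Then $\{p_B(\mathcal{X})\le\alpha\}=\{R_B\le k_B\}$. The conditional rejection probability is $\phi_B(\mathcal{X})=\mathbb{P}(R_B\le k_B\mid\mathcal{X})$ and the (unconditional) power is $\mathrm{Pow}(B)=\mathbb{E}[\phi_B(\mathcal{X})]=\mathbb{E}\bigl[\mathbb{P}(\mathrm{Binomial}(B,q(\mathcal{X}))\le k_B\mid\mathcal{X})\bigr]$, for $B\ge1$. *)

From HB Require Import structures.
From mathcomp Require Import all_boot all_order all_algebra all_fingroup.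
From mathcomp Require Import all_classical all_reals all_analysis.
Set Implicit Arguments. Unset Strict Implicit. Unset Printing Implicit Defensive.
Import Order.TTheory GRing.Theory Num.Theory.
Local Open Scope ring_scope.

Definition kcrit (R : realType) (alpha : R) (B : nat) : int :=
  Num.floor ((B.+1)%:R * alpha) - 1.

Definition binom_cdf (R : realType) (B : nat) (q : R) (k : int) : R :=
  \sum_(r < B.+1 | (r%:Z <= k)%R) ('C(B, r))%:R * q ^+ r * (1 - q) ^+ (B - r).

(* q(x) = P(T(x^pi) >= T(x)) for pi uniform on the finite group gT. *)
Definition qfun (R : realType) (D : Type) (gT : finGroupType)
  (act : D -> gT -> D) (T : D -> R) (x : D) : R :=
  #|[set g : gT | T x <= T (act x g)]|%:R / #|gT|%:R.

Definition Pow (R : realType) (d : measure_display) (Omega : measurableType d)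
  (P : probability Omega R) (D : Type) (gT : finGroupType)
  (act : D -> gT -> D) (T : D -> R) (X : Omega -> D) (alpha : R) (B : nat)
  : \bar R :=
  (\int[P]_(w in setT) (binom_cdf B (qfun act T (X w)) (kcrit alpha B))%:E)%E.

From HB Require Import structures.
From mathcomp Require Import all_boot all_order all_algebra all_fingroup.
From mathcomp Require Import all_classical all_reals all_analysis.
From mathcomp Require Import measurable_realfun.
From mathcomp Require Import ring lra zify.
Set Implicit Arguments. Unset Strict Implicit. Unset Printing Implicit Defensive.
Import Order.TTheory GRing.Theory Num.Theory.
Local Open Scope classical_set_scope.
Local Open Scope ring_scope.

(* Write [F n k q] for P(Binomial(n, q) < k), so that Pow(B) is the mean of
   [F B (floor((B+1) alpha)) q(X)].  Pascal's rule gives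
     F (n+1) (k+1) q = F n k q + (1 - q) b_n(k) = F n (k+1) q - q b_n(k),
   with b_n the binomial pmf.  As q(X) >= 1/|G|, and 1 - q(X) >= 1/|G| on the
   event {q(X) < 1} of positive probability, both correction terms are bounded
   below there by |G|^-(n+1): one more permutation raises the power strictly
   when the critical count goes up and lowers it strictly when it stays put.
   Such local maxima recur because floor(n alpha) moves by steps 0 or 1, and
   both floor(n alpha) and the deficit n - floor(n alpha) are unbounded. *)

Lemma exists_nat_mul_gt (R : archiRealFieldType) (c : R) K :
  0 < c -> exists n, K%:R < n%:R * c.
Proof.
move=> c0; exists (Num.truncn (K%:R / c)).+1.
by rewrite -ltr_pdivrMr ?truncnS_gt.
Qed.

Lemma exists_switch_off (P : pred nat) i t :
  P i -> ~~ P (i + t)%N -> exists2 m, (i <= m)%N & P m && ~~ P m.+1.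
Proof.
move=> Pi; elim: t => [|t IHt]; first by rewrite addn0 Pi.
rewrite addnS; have [Pit nPit1|nPit _] := boolP (P (i + t)); last exact: IHt.
by exists (i + t); rewrite ?leq_addr ?Pit.
Qed.

Lemma nondecreasing_unbounded_jump (f : nat -> nat) :
  (forall n, (f n <= f n.+1)%N) -> (forall K, exists n, (K < f n)%N) ->
  forall N, exists2 j, (N <= j)%N & (f j < f j.+1)%N.
Proof.
move=> f_step f_unb N; have [n fNn] := f_unb (f N).
have f_mono : {homo f : m n / (m <= n)%N} := homo_leq leqnn leq_trans f_step.
have Nn : (N <= n)%N.
  by rewrite leqNgt; apply/negP => /ltnW /f_mono; rewrite leqNgt fNn.
have [|j Nj /andP[fjN]] :=
    @exists_switch_off (fun j => f j <= f N)%N N (n - N) (leqnn _).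
  by rewrite subnKC // -ltnNge.
by rewrite -ltnNge => fNj1; exists j => //; exact: leq_ltn_trans fjN fNj1.
Qed.

Section FloorMultiples.
Variables (R : realType) (alpha : R).
Hypotheses (alpha_gt0 : 0 < alpha) (alpha_lt1 : alpha < 1).
Local Notation a n := (Num.truncn (n%:R * alpha)).

Let mul_alpha_ge0 n : 0 <= n%:R * alpha.
Proof. exact: mulr_ge0 (ler0n _ _) (ltW alpha_gt0). Qed.

Lemma kcritE B : kcrit alpha B = (a B.+1)%:Z - 1.
Proof. by rewrite /kcrit truncn_floor mul_alpha_ge0 gez0_abs // floor_ge0. Qed.

Lemma truncn_mulSn_le n : (a n.+1 <= n)%N.
Proof. by rewrite truncn_le_nat gtr_pMr. Qed.

Lemma truncn_mul_mono n : (a n <= a n.+1)%N.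
Proof. by apply/le_truncn/ler_wpM2r; rewrite ?ler_nat // ltW. Qed.

Lemma truncn_mul_step n : (a n.+1 <= (a n).+1)%N.
Proof.
rewrite truncn_le_nat -natr1 mulrDl mul1r -[(a n).+2%:R]natr1.
by rewrite ltrD // truncnS_gt.
Qed.

Lemma truncn_mul_unbounded K : exists n, (K < a n)%N.
Proof.
have [n Kn] := exists_nat_mul_gt K.+1 alpha_gt0.
by exists n; rewrite truncn_gt_nat ltW.
Qed.

Lemma truncn_mul_deficit_unbounded K : exists n, (K < n - a n)%N.
Proof.
have [n Kn] : exists n, K%:R < n%:R * (1 - alpha).
  by apply: exists_nat_mul_gt; rewrite subr_gt0.
exists n; suff : (K + a n < n)%N by lia.
have an : (a n)%:R <= n%:R * alpha by rewrite truncn_le mul_alpha_ge0.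
rewrite mulrBr mulr1 in Kn; rewrite -(ltr_nat R) natrD; lra.
Qed.

Lemma exists_truncn_mul_peak N :
  exists m, [/\ (N <= m)%N, a m.+1 = (a m).+1 & a m.+2 = a m.+1].
Proof.
have mono := truncn_mul_mono; have step := truncn_mul_step.
have [i Ni jump] := nondecreasing_unbounded_jump mono truncn_mul_unbounded N.
(* n - a n is nondecreasing too, and it jumps exactly where a is flat. *)
have deficit_step n : (n - a n <= n.+1 - a n.+1)%N by have := step n; lia.
have [j ij] := nondecreasing_unbounded_jump deficit_step
  truncn_mul_deficit_unbounded i.
move=> flat; have {}flat : a j.+1 = a j by have := step j; have := mono j; lia.
have [|m im /andP[up /negP flat_next]] :=
  @exists_switch_off (fun m => a m < a m.+1)%N i (j - i) jump.
  by rewrite subnKC // flat ltnn.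
exists m; split; first exact: leq_trans Ni im.
- by have := step m; lia.
- by have := mono m.+1; lia.
Qed.

Lemma kcrit_peaks N : exists B, [/\ (N <= B)%N, (2 <= B)%N,
  kcrit alpha B - kcrit alpha B.-1 = 1 & kcrit alpha B.+1 - kcrit alpha B = 0].
Proof.
have [m [Nm up flat]] := exists_truncn_mul_peak (N + 2).
have m2 : (2 <= m)%N by apply: leq_trans Nm; rewrite leq_addl.
exists m; rewrite !kcritE prednK ?up ?flat; last exact: leq_trans m2.
split; [exact: leq_trans (leq_addr _ _) Nm | exact: m2 | lia | lia].
Qed.
End FloorMultiples.

Section BinomialCDF.
Variable R : realType.
Implicit Types (p e : R) (n k : nat).

Definition binomial_cdf_lt n p k := \sum_(i < k) binomial_pmf n p i.

Lemma binomial_pmfE n p k :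
  binomial_pmf n p k = 'C(n, k)%:R * p ^+ k * (1 - p) ^+ (n - k).
Proof. by rewrite /binomial_pmf -mulr_natl mulrA. Qed.

Lemma binom_cdfE n p k : binom_cdf n p (k%:Z - 1) = binomial_cdf_lt n p k.
Proof.
rewrite /binom_cdf /binomial_cdf_lt.
have lt_k (r : 'I_n.+1) : (r%:Z <= k%:Z - 1) = (r < k)%N by apply/idP/idP; lia.
under eq_bigl do rewrite lt_k.
under eq_bigr do rewrite -binomial_pmfE.
rewrite (big_ord_widen_cond (k + n.+1) (fun r => r < k)%N) ?leq_addl //.
rewrite (big_ord_widen (k + n.+1) (binomial_pmf n p)) ?leq_addr //.
rewrite big_mkcond [RHS]big_mkcond; apply: eq_bigr => i _ /=.
case: (i < k)%N; rewrite ?andbF ?andbT //.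
by case: ltnP => // ni; rewrite binomial_pmfE bin_small // !mul0r.
Qed.

Lemma binomial_pmf0S n p : binomial_pmf n.+1 p 0 = (1 - p) * binomial_pmf n p 0.
Proof. by rewrite !binomial_pmfE !bin0 !subn0 exprS; ring. Qed.

Lemma binomial_pmfSS n p k : binomial_pmf n.+1 p k.+1 =
  p * binomial_pmf n p k + (1 - p) * binomial_pmf n p k.+1.
Proof.
rewrite !binomial_pmfE binS natrD subSS [p ^+ k.+1]exprS.
(* ring cannot see through truncated exponents, hence the abstractions. *)
have [kn|nk] := ltnP k n; last first.
  rewrite (@bin_small n k.+1) ?ltnS //.
  by move: (_ ^+ (n - k)) (_ ^+ (n - k.+1)) => ? ?; ring.
rewrite (_ : n - k = (n - k.+1).+1)%N ?exprS; last by lia.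
by move: (_ ^+ (n - k.+1)) => ?; ring.
Qed.

Lemma binomial_cdf_ltSS n p k : binomial_cdf_lt n.+1 p k.+1 =
  p * binomial_cdf_lt n p k + (1 - p) * binomial_cdf_lt n p k.+1.
Proof.
rewrite /binomial_cdf_lt big_ord_recl [in X in _ + _ * X]big_ord_recl.
rewrite binomial_pmf0S mulrDr addrCA !mulr_sumr -big_split /=.
by congr (_ + _); apply: eq_bigr => i _; rewrite binomial_pmfSS.
Qed.

Lemma binomial_cdf_lt_recr n p k :
  binomial_cdf_lt n p k.+1 = binomial_cdf_lt n p k + binomial_pmf n p k.
Proof. by rewrite /binomial_cdf_lt big_ord_recr. Qed.

Lemma binomial_cdf_ltSS_add n p k : binomial_cdf_lt n.+1 p k.+1 =
  binomial_cdf_lt n p k + (1 - p) * binomial_pmf n p k.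
Proof. by rewrite binomial_cdf_ltSS binomial_cdf_lt_recr; ring. Qed.

Lemma binomial_cdf_ltSS_sub n p k : binomial_cdf_lt n.+1 p k.+1 =
  binomial_cdf_lt n p k.+1 - p * binomial_pmf n p k.
Proof. by rewrite binomial_cdf_ltSS binomial_cdf_lt_recr; ring. Qed.

Lemma binomial_cdf_lt_ge0 n p k : 0 <= p <= 1 -> 0 <= binomial_cdf_lt n p k.
Proof. by move=> p01; apply: sumr_ge0 => i _; exact: binomial_pmf_ge0. Qed.

Lemma binomial_pmf_le_bin n p k :
  0 <= p <= 1 -> binomial_pmf n p k <= 'C(n, k)%:R.
Proof.
case/andP=> p0 p1; rewrite binomial_pmfE -mulrA ler_piMr //.
by rewrite mulr_ile1 ?exprn_ge0 ?exprn_ile1 ?subr_ge0 // lerBlDr lerDl.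
Qed.

Lemma binomial_cdf_lt_le n p k :
  0 <= p <= 1 -> binomial_cdf_lt n p k <= \sum_(i < k) 'C(n, i)%:R.
Proof. by move=> p01; apply: ler_sum => i _; exact: binomial_pmf_le_bin. Qed.

Lemma binomial_pmf_ge n p k e : 0 <= e -> e <= p -> e <= 1 - p -> (k <= n)%N ->
  e ^+ n <= binomial_pmf n p k.
Proof.
move=> e0 ep e1p kn; rewrite binomial_pmfE -(subnKC kn) exprD subnKC // -mulrA.
rewrite -[X in X <= _]mul1r ler_pM ?mulr_ge0 ?exprn_ge0 // ?ler1n ?bin_gt0 //.
by rewrite ler_pM ?exprn_ge0 // lerXn2r ?nnegrE // (le_trans e0).
Qed.

Lemma measurable_binomial_cdf_lt n k :
  measurable_fun setT (fun p : R => binomial_cdf_lt n p k).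
Proof. by apply: measurable_sum => i; exact: measurable_binomial_pmf. Qed.

End BinomialCDF.

Section IntegralGap.
Local Open Scope ereal_scope.
Variables (R : realType) (d : measure_display) (Omega : measurableType d).
Variable P : probability Omega R.

Lemma integral_lt_of_gap (f g : Omega -> R) (A : set Omega) (c M : R) :
  measurable_fun setT f -> measurable_fun setT g -> measurable A ->
  (0 < c)%R -> 0 < P A -> (forall w, 0 <= f w <= M)%R ->
  (forall w, f w <= g w)%R -> (forall w, A w -> f w + c <= g w)%R ->
  \int[P]_(w in setT) (f w)%:E < \int[P]_(w in setT) (g w)%:E.
Proof.
move=> mf mg mA c0 PA f0M fg fcg.
have f0 w : setT w -> 0 <= (f w)%:E by rewrite lee_fin; case/andP: (f0M w).
have f_fin : \int[P]_(w in setT) (f w)%:E \is a fin_num.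
  rewrite ge0_fin_numE ?integral_ge0 //.
  apply: (@le_lt_trans _ _ (\int[P]_(w in setT) (cst M%:E w))).
    apply: ge0_le_integral => //; first exact/measurable_EFinP.
    by move=> w _; rewrite lee_fin; case/andP: (f0M w).
  by rewrite integral_cst //= probability_setT mule1 ltry.
have cA0 w : (0 <= c * \1_A w)%R by rewrite indicE mulr_ge0 ?ler0n ?ltW.
have mcA : measurable_fun setT (fun w => c * \1_A w)%R.
  by apply: measurable_funM => //; exact: measurable_indic.
have gap : \int[P]_(w in setT) (f w + c * \1_A w)%:E <=
           \int[P]_(w in setT) (g w)%:E.
  apply: ge0_le_integral => //.
  - by move=> w _; rewrite lee_fin addr_ge0 //; case/andP: (f0M w).
  - by apply/measurable_EFinP; exact: measurable_funD.
  - exact/measurable_EFinP.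
  move=> w _; rewrite lee_fin indicE.
  by have [/set_mem/fcg|] := boolP (w \in A); rewrite ?mulr1 ?mulr0 ?addr0.
apply: lt_le_trans gap; under [X in _ < X]eq_integral do rewrite EFinD EFinM.
rewrite ge0_integralD //; first last.
- by apply/measurable_EFinP.
- by move=> w _; rewrite lee_fin.
- exact/measurable_EFinP.
rewrite ge0_integralZl_EFin ?ltW //; last first.
  by apply/measurable_EFinP; exact: measurable_indic.
by rewrite integral_indic // setIT lteDl // mule_gt0.
Qed.
End IntegralGap.

Section BinomialMixture.
Variables (R : realType) (d : measure_display) (Omega : measurableType d).
Variables (P : probability Omega R) (h : Omega -> R) (e : R).
Hypotheses (mh : measurable_fun setT h) (e_gt0 : 0 < e).
Hypotheses (e_le_h : forall w, e <= h w) (h_le1 : forall w, h w <= 1).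
Hypothesis e_le_1h : forall w, h w < 1 -> e <= 1 - h w.
Hypothesis h_lt1_pos : (0 < P [set w | (h w < 1)%R])%E.

Let h01 w : 0 <= h w <= 1.
Proof. by rewrite h_le1 andbT (le_trans (ltW e_gt0)). Qed.

Let mh_lt1 : measurable [set w | h w < 1].
Proof. by rewrite -preimage_itvNyo -[X in measurable X]setTI; exact: mh. Qed.

Let mcdf n k : measurable_fun setT (fun w => binomial_cdf_lt n (h w) k).
Proof. exact: measurableT_comp (measurable_binomial_cdf_lt n k) mh. Qed.

Let pmf_gap n k x w : (k <= n)%N -> h w < 1 -> e <= x ->
  e ^+ n.+1 <= x * binomial_pmf n (h w) k.
Proof.
move=> kn hw1 ex; rewrite exprS; apply: ler_pM => //.
- exact: ltW.
- exact: exprn_ge0 (ltW e_gt0).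
- exact: binomial_pmf_ge (ltW e_gt0) (e_le_h w) (e_le_1h hw1) kn.
Qed.

Lemma integral_binomial_cdf_ltSS_gt n k : (k <= n)%N ->
  (\int[P]_(w in setT) (binomial_cdf_lt n (h w) k)%:E <
   \int[P]_(w in setT) (binomial_cdf_lt n.+1 (h w) k.+1)%:E)%E.
Proof.
move=> kn; apply: (integral_lt_of_gap _ _ mh_lt1 (exprn_gt0 n.+1 e_gt0)
  (M := \sum_(i < k) 'C(n, i)%:R)) => // w.
- by rewrite binomial_cdf_lt_ge0 ?binomial_cdf_lt_le.
- rewrite binomial_cdf_ltSS_add lerDl mulr_ge0 ?binomial_pmf_ge0 //.
  by rewrite subr_ge0; case/andP: (h01 w).
- by move=> hw1; rewrite binomial_cdf_ltSS_add lerD2l pmf_gap ?e_le_1h.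
Qed.

Lemma integral_binomial_cdf_ltSn_lt n k : (k <= n)%N ->
  (\int[P]_(w in setT) (binomial_cdf_lt n.+1 (h w) k.+1)%:E <
   \int[P]_(w in setT) (binomial_cdf_lt n (h w) k.+1)%:E)%E.
Proof.
move=> kn; apply: (integral_lt_of_gap _ _ mh_lt1 (exprn_gt0 n.+1 e_gt0)
  (M := \sum_(i < k.+1) 'C(n.+1, i)%:R)) => // w.
- by rewrite binomial_cdf_lt_ge0 ?binomial_cdf_lt_le.
- rewrite binomial_cdf_ltSS_sub lerBlDr lerDl mulr_ge0 ?binomial_pmf_ge0 //.
  by case/andP: (h01 w).
- move=> hw1; have := @pmf_gap n k (h w) w kn hw1 (e_le_h w).
  by rewrite binomial_cdf_ltSS_sub; lra.
Qed.
End BinomialMixture.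

Section PermutationProbability.
Variables (R : realType) (dD : measure_display) (D : measurableType dD).
Variables (gT : finGroupType) (act : D -> gT -> D) (T : D -> R).

Let card_gT_gt0 : (0 : R) < #|gT|%:R.
Proof. by rewrite ltr0n; apply/card_gt0P; exists 1%g. Qed.

Lemma qfun_ge (act1 : forall x, act x 1%g = x) x : #|gT|%:R^-1 <= qfun act T x.
Proof.
rewrite /qfun ler_pdivlMr // mulVf ?gt_eqF // ler1n.
by apply/card_gt0P; exists 1%g; rewrite inE act1.
Qed.

Lemma qfun_le1 x : qfun act T x <= 1.
Proof. by rewrite /qfun ler_pdivrMr // mul1r ler_nat max_card. Qed.

Lemma qfun_lt1 x : qfun act T x < 1 -> #|gT|%:R^-1 <= 1 - qfun act T x.
Proof.
rewrite /qfun ltr_pdivrMr // mul1r ltr_nat => cardN.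
rewrite lerBrDr -[X in X + _]mul1r -mulrDl ler_pdivrMr // mul1r.
by rewrite nat1r ler_nat.
Qed.

Lemma measurable_qfun :
  (forall g, measurable_fun setT (fun x => act x g)) -> measurable_fun setT T ->
  measurable_fun setT (qfun act T).
Proof.
move=> mact mT; apply: measurable_funM; last exact: measurable_cst.
under eq_fun do rewrite -sum1_card natr_sum big_mkcond.
apply: measurable_sum => g /=; under eq_fun do rewrite inE.
apply: measurable_fun_ifT; [|exact: measurable_cst..].
by apply: measurable_fun_ler => //; exact: measurableT_comp.
Qed.

End PermutationProbability.

Section MonteCarloPower.
Variables (R : realType) (d : measure_display) (Omega : measurableType d).
Variables (P : probability Omega R) (dD : measure_display).
Variables (D : measurableType dD) (gT : finGroupType) (act : D -> gT -> D).
Variables (T : D -> R) (X : Omega -> D) (alpha : R).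
Hypotheses (alpha_gt0 : 0 < alpha) (alpha_lt1 : alpha < 1).
Hypotheses (act1 : forall x, act x 1%g = x).
Hypotheses (mact : forall g, measurable_fun setT (fun x => act x g)).
Hypotheses (mT : measurable_fun setT T) (mX : measurable_fun setT X).
Hypothesis q_lt1_pos : (0 < P [set w | (qfun act T (X w) < 1)%R])%E.

Local Notation q w := (qfun act T (X w)).
Local Notation Pow := (Pow P act T X alpha).

Lemma PowE B : Pow B = (\int[P]_(w in setT)
  (binomial_cdf_lt B (q w) (Num.truncn (B.+1%:R * alpha)))%:E)%E.
Proof.
by rewrite /Pow kcritE //; apply: eq_integral => w _; rewrite binom_cdfE.
Qed.

Lemma Pow_strict_local_max C :
  kcrit alpha C.+1 - kcrit alpha C = 1 ->
  kcrit alpha C.+2 - kcrit alpha C.+1 = 0 ->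
  (Pow C < Pow C.+1)%E /\ (Pow C.+2 < Pow C.+1)%E.
Proof.
rewrite !kcritE // !PowE => up flat.
have kC := truncn_mulSn_le alpha_lt1 C.
set k := Num.truncn (C.+1%:R * alpha) in up flat kC *.
have -> : Num.truncn (C.+2%:R * alpha) = k.+1 by lia.
have -> : Num.truncn (C.+3%:R * alpha) = k.+1 by lia.
have mq : measurable_fun setT (fun w => q w).
  exact: measurableT_comp (measurable_qfun mact mT) mX.
have e_gt0 : 0 < #|gT|%:R^-1 :> R.
  by rewrite invr_gt0 ltr0n; apply/card_gt0P; exists 1%g.
have e_le_q w := qfun_ge T act1 (X w).
have q_le1 w := qfun_le1 act T (X w).
have e_le_1q w := @qfun_lt1 _ _ _ _ act T (X w).
have rise :=
  integral_binomial_cdf_ltSS_gt mq e_gt0 e_le_q q_le1 e_le_1q q_lt1_pos.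
have fall :=
  integral_binomial_cdf_ltSn_lt mq e_gt0 e_le_q q_le1 e_le_1q q_lt1_pos.
by split; [apply: rise kC | apply: fall (leqW kC)].
Qed.

End MonteCarloPower.

Theorem theorem1 (R : realType) (d : measure_display) (Omega : measurableType d)
  (P : probability Omega R) (dD : measure_display) (D : measurableType dD)
  (gT : finGroupType) (act : D -> gT -> D) (T : D -> R) (X : Omega -> D)
  (alpha : R) :
  0 < alpha < 1 ->
  (forall x, act x 1%g = x) ->
  (forall x g h, act x (g * h)%g = act (act x g) h) ->
  (forall g, measurable_fun setT (fun x => act x g)) ->
  measurable_fun setT T ->
  measurable_fun setT X ->
  (0 < P [set w | (qfun act T (X w) < 1)%R])%E ->
  (forall B : nat, (2 <= B)%N ->
     kcrit alpha B - kcrit alpha B.-1 = 1 ->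
     kcrit alpha B.+1 - kcrit alpha B = 0 ->
     (Pow P act T X alpha B.-1 < Pow P act T X alpha B)%E /\
     (Pow P act T X alpha B.+1 < Pow P act T X alpha B)%E)
  /\
  (forall N : nat, exists B : nat, [/\ (N <= B)%N, (2 <= B)%N,
       kcrit alpha B.-1 < kcrit alpha B & kcrit alpha B = kcrit alpha B.+1])
  /\
  (forall N : nat, exists B : nat, [/\ (N <= B)%N, (2 <= B)%N,
       (Pow P act T X alpha B.-1 < Pow P act T X alpha B)%E &
       (Pow P act T X alpha B.+1 < Pow P act T X alpha B)%E]).
Proof.
move=> /andP[alpha_gt0 alpha_lt1] act1 _ mact mT mX q_lt1_pos.
have local_max :=
  Pow_strict_local_max alpha_gt0 alpha_lt1 act1 mact mT mX q_lt1_pos.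
split; first by case=> [|C] // _; exact: local_max.
split=> N;
  have [[|C] [NB B2 up flat]] := kcrit_peaks alpha_gt0 alpha_lt1 N => //.
  by exists C.+1; split=> //; lia.
by exists C.+1; have [] := local_max C up flat.
Qed.
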